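(* Let $\eta>0$, $u>0$, and $r_\eta(\theta):=\frac{\eta-\sqrt{\eta^2+4\sin^2\theta}}{2\sin\theta}$ for $\theta\in(-\pi,0)$. Then $(-\pi,0)$ can be partitioned into at most 9 intervals on each of which the function \[ \theta\mapsto\arg\big\{1-u^2r_\eta^2(\theta)e^{2i\theta}\big\} \] is monotonic. Moreover, when $u\le1$ there exists $\tilde\theta_{\eta,u}\in(-\frac{\pi}{2},0)$ such that this function is decreasing on $(-\pi,-\tilde\theta_{\eta,u}-\pi)$, increasing on $(-\tilde\theta_{\eta,u}-\pi,\tilde\theta_{\eta,u})$ and decreasing on $(\tilde\theta_{\eta,u},0)$; here $\tilde\theta_{\eta,u}$ is the unique solution $\theta\in(-\frac{\pi}{2},0)$ of \[ -u^2r_\eta^8(\theta)-(1-u^2)r_\eta^6(\theta)+(5+u^2)r_\eta^4(\theta)-(u^2+4\eta^2+7)r_\eta^2(\theta)+3=0. \]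
   Context: $\arg$ denotes the principal argument with values in $(-\pi,\pi]$. *)

From Stdlib Require Import Reals Lra.
Open Scope R_scope.

(* Principal argument, with values in (-PI, PI], of the complex number x + i y.
   (Convention arg 0 = 0; irrelevant here since the relevant number never vanishes.) *)
Definition Arg (x y : R) : R :=
  if Rlt_dec 0 x then atan (y / x)
  else if Rlt_dec x 0 then
    (if Rle_dec 0 y then atan (y / x) + PI else atan (y / x) - PI)
  else if Rlt_dec 0 y then PI / 2
  else if Rlt_dec y 0 then - (PI / 2)
  else 0.

Definition r_eta (eta theta : R) : R :=
  (eta - sqrt (eta ^ 2 + 4 * (sin theta) ^ 2)) / (2 * sin theta).

(* theta |-> arg{ 1 - u^2 r_eta(theta)^2 e^{2 i theta} }, where
   1 - u^2 r^2 e^{2 i theta} = (1 - u^2 r^2 cos(2 theta)) + i (- u^2 r^2 sin(2 theta)). *)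
Definition argfun (eta u theta : R) : R :=
  let w := u ^ 2 * (r_eta eta theta) ^ 2 in
  Arg (1 - w * cos (2 * theta)) (- (w * sin (2 * theta))).

Definition Pthe (eta u theta : R) : R :=
  let r := r_eta eta theta in
  - u ^ 2 * r ^ 8 - (1 - u ^ 2) * r ^ 6 + (5 + u ^ 2) * r ^ 4
  - (u ^ 2 + 4 * eta ^ 2 + 7) * r ^ 2 + 3.

Definition nondecr_on (D : R -> Prop) (f : R -> R) : Prop :=
  forall x y, D x -> D y -> x <= y -> f x <= f y.
Definition nonincr_on (D : R -> Prop) (f : R -> R) : Prop :=
  forall x y, D x -> D y -> x <= y -> f y <= f x.
Definition incr_on (D : R -> Prop) (f : R -> R) : Prop :=
  forall x y, D x -> D y -> x < y -> f x < f y.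
Definition decr_on (D : R -> Prop) (f : R -> R) : Prop :=
  forall x y, D x -> D y -> x < y -> f y < f x.

From Stdlib Require Import Reals Lra Lia.
From Coquelicot Require Import Coquelicot.
Open Scope R_scope.

(* On (-PI/2, 0) the number 1 - u^2 r^2 e^(2 i theta) lies in the upper half plane, so its
   argument is PI/2 - atan of its cotangent [argcot]; using sin theta (r^2 - 1) = eta r, the
   derivative of [argcot] is P(r^2) times a positive factor, where P is the quartic of the
   statement written in x = r^2.  As theta runs over [-PI/2, 0), x = r_eta(theta)^2 decreases
   from r_eta(-PI/2)^2 to 0, so the monotonicity pieces of arg correspond to the sign pieces
   of P.  P'' is a concave quadratic, positive at 0, hence changes sign at most once; so P'
   changes sign at most twice and P at most three times: four pieces on (-PI/2, 0).  The
   symmetry arg(-PI - theta) = - arg(theta) doubles this to eight on (-PI, 0).  For u <= 1,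
   P' < 0 on [0, 1], so P has a single root, which gives tilde theta. *)

Lemma MVT_is_derive (f df : R -> R) (a b : R) : a < b ->
  (forall x, a <= x <= b -> is_derive f x (df x)) ->
  exists c, a < c < b /\ f b - f a = df c * (b - a).
Proof.
  intros Hab Hd. destruct (MVT_cor2 f df a b Hab) as [c [Hc Hcab]].
  - intros c Hc. apply is_derive_Reals, Hd, Hc.
  - exists c. split; assumption.
Qed.

Lemma continuity_of_is_derive (f df : R -> R) :
  (forall x, is_derive f x (df x)) -> continuity f.
Proof.
  intros Hd x. apply derivable_continuous_pt. exists (df x). apply is_derive_Reals, Hd.
Qed.

Lemma atan_increment a b : exists k, 0 < k /\ atan b - atan a = k * (b - a).
Proof.
  destruct (Req_dec a b) as [<- | Hab].
  { exists 1. split; lra. }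
  exists ((atan b - atan a) / (b - a)). split; [|field; lra].
  destruct (Rlt_or_le a b) as [Hlt | Hle].
  - pose proof (atan_increasing a b Hlt). apply Rdiv_lt_0_compat; lra.
  - pose proof (atan_increasing b a ltac:(lra)).
    replace ((atan b - atan a) / (b - a)) with ((atan a - atan b) / (a - b)) by (field; lra).
    apply Rdiv_lt_0_compat; lra.
Qed.

Definition nonneg_on (g : R -> R) (a b : R) : Prop := forall x, a < x < b -> 0 <= g x.
Definition nonpos_on (g : R -> R) (a b : R) : Prop := forall x, a < x < b -> g x <= 0.

Lemma nonpos_on_opp g a b : nonneg_on (fun x => - g x) a b -> nonpos_on g a b.
Proof. intros H x Hx. specialize (H x Hx). simpl in H. lra. Qed.

Lemma nonneg_on_opp g a b : nonpos_on g a b -> nonneg_on (fun x => - g x) a b.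
Proof. intros H x Hx. specialize (H x Hx). lra. Qed.

Lemma nonneg_on_right_end g a b : continuity_pt g b -> a < b -> nonneg_on g a b -> 0 <= g b.
Proof.
  intros Hc Hab Hg. destruct (Rle_or_lt 0 (g b)) as [h | Hneg]; [exact h |]. exfalso.
  destruct (Hc (- g b / 2) ltac:(lra)) as [delta [Hdelta Hnear]].
  set (x := b - Rmin (delta / 2) ((b - a) / 2)).
  assert (Hm : 0 < Rmin (delta / 2) ((b - a) / 2)) by (apply Rmin_pos; lra).
  pose proof (Rmin_l (delta / 2) ((b - a) / 2)).
  pose proof (Rmin_r (delta / 2) ((b - a) / 2)).
  assert (Hgx : Rabs (g x - g b) < - g b / 2).
  { apply Hnear. split; [split; [exact I | unfold x; lra] |].
    simpl. unfold R_dist, x. rewrite Rabs_left; lra. }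
  specialize (Hg x ltac:(unfold x; lra)). apply Rabs_def2 in Hgx. lra.
Qed.

Lemma nonneg_on_join g p q r : continuity g -> p <= q <= r ->
  nonneg_on g p q -> nonneg_on g q r -> nonneg_on g p r.
Proof.
  intros Hc Hpqr Hpq Hqr x Hx. destruct (Req_dec p q) as [-> | Hpq_ne].
  { apply Hqr, Hx. }
  destruct (Rtotal_order x q) as [h | [-> | h]].
  - apply Hpq. lra.
  - apply (nonneg_on_right_end g p); [apply Hc | lra | exact Hpq].
  - apply Hqr. lra.
Qed.

Lemma nonpos_on_join g p q r : continuity g -> p <= q <= r ->
  nonpos_on g p q -> nonpos_on g q r -> nonpos_on g p r.
Proof.
  intros Hc Hpqr Hpq Hqr. apply nonpos_on_opp.
  apply (nonneg_on_join _ p q r); [apply continuity_opp, Hc | exact Hpqr | |];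
    apply nonneg_on_opp; assumption.
Qed.

Lemma sign_split_of_deriv_nonneg (g dg : R -> R) a b :
  (forall x, is_derive g x (dg x)) -> a <= b -> nonneg_on dg a b ->
  exists c, a <= c <= b /\ nonpos_on g a c /\ nonneg_on g c b.
Proof.
  intros Hd Hab Hdg.
  assert (Hmono : forall x y, a <= x -> x <= y -> y <= b -> g x <= g y).
  { intros x y Hx Hxy Hy. destruct (Req_dec x y) as [-> | Hne]; [lra |].
    destruct (MVT_is_derive g dg x y ltac:(lra) (fun z _ => Hd z)) as [c [Hc Hinc]].
    specialize (Hdg c ltac:(lra)). nra. }
  destruct (Rle_or_lt 0 (g a)) as [Ha | Ha].
  { exists a. split; [lra |]. split; intros x Hx; [lra |].
    specialize (Hmono a x ltac:(lra) ltac:(lra) ltac:(lra)). lra. }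
  destruct (Rle_or_lt (g b) 0) as [Hb | Hb].
  { exists b. split; [lra |]. split; intros x Hx; [| lra].
    specialize (Hmono x b ltac:(lra) ltac:(lra) ltac:(lra)). lra. }
  assert (Hlt : a < b) by (destruct (Req_dec a b) as [<- |]; lra).
  destruct (IVT g a b (continuity_of_is_derive g dg Hd) Hlt Ha Hb) as [c [Hc Hgc]].
  exists c. split; [exact Hc |]. split; intros x Hx.
  - specialize (Hmono x c ltac:(lra) ltac:(lra) ltac:(lra)). lra.
  - specialize (Hmono c x ltac:(lra) ltac:(lra) ltac:(lra)). lra.
Qed.

Lemma sign_split_of_deriv_nonpos (g dg : R -> R) a b :
  (forall x, is_derive g x (dg x)) -> a <= b -> nonpos_on dg a b ->
  exists c, a <= c <= b /\ nonneg_on g a c /\ nonpos_on g c b.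
Proof.
  intros Hd Hab Hdg.
  destruct (sign_split_of_deriv_nonneg (fun x => - g x) (fun x => - dg x) a b)
    as [c [Hc [Hl Hr]]].
  - intros x. exact (is_derive_opp g x _ (Hd x)).
  - exact Hab.
  - apply nonneg_on_opp, Hdg.
  - exists c. split; [exact Hc |]. split.
    + intros x Hx. specialize (Hl x Hx). simpl in Hl. lra.
    + apply nonpos_on_opp, Hr.
Qed.

Lemma sign_pattern_of_deriv_pos_neg (g dg : R -> R) a m b :
  (forall x, is_derive g x (dg x)) -> a <= m <= b ->
  nonneg_on dg a m -> nonpos_on dg m b ->
  exists c d, a <= c <= d /\ d <= b /\
    nonpos_on g a c /\ nonneg_on g c d /\ nonpos_on g d b.
Proof.
  intros Hd Hm Hinc Hdec.
  destruct (sign_split_of_deriv_nonneg g dg a m Hd ltac:(lra) Hinc) as [c [Hc [Hac Hcm]]].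
  destruct (sign_split_of_deriv_nonpos g dg m b Hd ltac:(lra) Hdec) as [d [Hd' [Hmd Hdb]]].
  exists c, d. repeat split; try lra; [exact Hac | | exact Hdb].
  apply (nonneg_on_join g c m d); [exact (continuity_of_is_derive g dg Hd) | lra | assumption ..].
Qed.

Lemma sign_pattern_of_deriv_neg_pos_neg (g dg : R -> R) a c d b :
  (forall x, is_derive g x (dg x)) -> a <= c <= d -> d <= b ->
  nonpos_on dg a c -> nonneg_on dg c d -> nonpos_on dg d b ->
  exists y1 y2 y3, a <= y1 <= y2 /\ y2 <= y3 <= b /\
    nonneg_on g a y1 /\ nonpos_on g y1 y2 /\ nonneg_on g y2 y3 /\ nonpos_on g y3 b.
Proof.
  intros Hd Hcd Hdb H1 H2 H3.
  pose proof (continuity_of_is_derive g dg Hd) as Hc.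
  destruct (sign_split_of_deriv_nonpos g dg a c Hd ltac:(lra) H1) as [y1 [Hy1 [Ha1 H1c]]].
  destruct (sign_split_of_deriv_nonneg g dg c d Hd ltac:(lra) H2) as [y2 [Hy2 [Hc2 H2d]]].
  destruct (sign_split_of_deriv_nonpos g dg d b Hd ltac:(lra) H3) as [y3 [Hy3 [Hd3 H3b]]].
  exists y1, y2, y3. repeat split; try lra; [exact Ha1 | | | exact H3b].
  - apply (nonpos_on_join g y1 c y2); [exact Hc | lra | assumption ..].
  - apply (nonneg_on_join g y2 d y3); [exact Hc | lra | assumption ..].
Qed.

Lemma incr_lt_iff (I : R -> Prop) (f : R -> R) :
  (forall a b, I a -> I b -> a < b -> f a < f b) ->
  forall a b, I a -> I b -> (f a < f b <-> a < b).
Proof.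
  intros Hf a b Ha Hb. split; [| apply Hf; assumption].
  intros Hfab. destruct (Rtotal_order a b) as [| [-> | Hba]]; [assumption | lra |].
  specialize (Hf b a Hb Ha Hba). lra.
Qed.

Lemma sin_lt_iff a b : - (PI / 2) <= a <= PI / 2 -> - (PI / 2) <= b <= PI / 2 ->
  (sin a < sin b <-> a < b).
Proof.
  apply (incr_lt_iff (fun x => - (PI / 2) <= x <= PI / 2)).
  intros x y Hx Hy. apply sin_increasing_1; lra.
Qed.

Lemma chain_le (t : nat -> R) n : (forall i, (i < n)%nat -> t i <= t (S i)) ->
  forall i j, (i <= j)%nat -> (j <= n)%nat -> t i <= t j.
Proof.
  intros Ht i j Hij. induction Hij as [| j Hij IH]; intros Hj; [lra |].
  specialize (IH ltac:(lia)). specialize (Ht j ltac:(lia)). lra.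
Qed.

Lemma strict_subchain (P : R -> R -> Prop) n : forall t : nat -> R,
  t 0%nat < t n -> (forall i, (i < n)%nat -> t i <= t (S i)) ->
  (forall i, (i < n)%nat -> P (t i) (t (S i))) ->
  exists m (s : nat -> R), (1 <= m <= n)%nat /\ s 0%nat = t 0%nat /\ s m = t n /\
    (forall i, (i < m)%nat -> s i < s (S i)) /\ (forall i, (i < m)%nat -> P (s i) (s (S i))).
Proof.
  induction n as [| n IH]; intros t Hlt Hle HP; [lra |].
  set (t' := fun i => t (S i)).
  assert (Hle' : forall i, (i < n)%nat -> t' i <= t' (S i)) by (intros; apply Hle; lia).
  assert (HP' : forall i, (i < n)%nat -> P (t' i) (t' (S i))) by (intros; apply HP; lia).
  assert (H1n : t 1%nat <= t (S n)) by (apply (chain_le t (S n)); auto; lia).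
  destruct (Req_dec (t 0%nat) (t 1%nat)) as [E01 | N01].
  - destruct (IH t' ltac:(unfold t'; lra) Hle' HP') as [m [s [Hm [Hs0 [Hsm [Hs Hps]]]]]].
    exists m, s. split; [lia |]. split; [rewrite Hs0, E01; reflexivity |]. auto.
  - pose proof (Hle 0%nat ltac:(lia)).
    destruct (Req_dec (t 1%nat) (t (S n))) as [E1n | N1n].
    + exists 1%nat, (fun i => match i with O => t 0%nat | _ => t (S n) end).
      split; [lia |]. split; [reflexivity |]. split; [reflexivity |].
      split; intros i Hi; replace i with 0%nat by lia; [lra |].
      rewrite <- E1n. apply HP. lia.
    + destruct (IH t' ltac:(unfold t'; lra) Hle' HP') as [m [s [Hm [Hs0 [Hsm [Hs Hps]]]]]].
      exists (S m), (fun i => match i with O => t 0%nat | S j => s j end).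
      split; [lia |]. split; [reflexivity |]. split; [exact Hsm |].
      split; intros [| i] Hi.
      * rewrite Hs0. unfold t'. lra.
      * apply Hs. lia.
      * rewrite Hs0. apply HP. lia.
      * apply Hps. lia.
Qed.

Lemma sin_mPI2_lt_0 : sin (- (PI / 2)) < 0.
Proof. rewrite sin_neg, sin_PI2. lra. Qed.

Lemma r_eta_props eta th : 0 < eta -> sin th < 0 ->
  0 < r_eta eta th < 1 /\ sin th * (r_eta eta th ^ 2 - 1) = eta * r_eta eta th.
Proof.
  intros Heta Hs. unfold r_eta. set (s := sin th) in *.
  assert (HS2 : sqrt (eta ^ 2 + 4 * s ^ 2) ^ 2 = eta ^ 2 + 4 * s ^ 2)
    by (apply pow2_sqrt; nra).
  pose proof (sqrt_pos (eta ^ 2 + 4 * s ^ 2)).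
  set (S := sqrt (eta ^ 2 + 4 * s ^ 2)) in *. clearbody S.
  assert (HSeta : eta < S) by nra.
  set (r := (eta - S) / (2 * s)).
  assert (Hr : S = eta - 2 * r * s) by (unfold r; field; lra).
  clearbody r. subst S.
  assert (Hr0 : 0 < r) by nra.
  assert (Hrel : s * (s * r ^ 2 - s - eta * r) = 0) by nra.
  apply Rmult_integral in Hrel as [Hs0 | Hrel]; [lra |].
  repeat split; nra.
Qed.

Lemma r_eta_derive eta th : 0 < eta -> sin th < 0 ->
  is_derive (r_eta eta) th
    (cos th * (1 - r_eta eta th ^ 2) * r_eta eta th / (sin th * (1 + r_eta eta th ^ 2))).
Proof.
  intros Heta Hs. destruct (r_eta_props eta th Heta Hs) as [Hr Hrel].
  assert (HS : sqrt (eta ^ 2 + 4 * sin th ^ 2) = eta - 2 * r_eta eta th * sin th)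
    by (unfold r_eta; field; lra).
  unfold r_eta at 1. auto_derive.
  { split; [nra | split; [| exact I]]. nra. }
  replace (eta * (eta * 1) + 4 * (sin th * (sin th * 1))) with (eta ^ 2 + 4 * sin th ^ 2) by ring.
  rewrite HS.
  set (r := r_eta eta th) in *. set (s := sin th) in *.
  assert (Heta' : eta = s * (r ^ 2 - 1) / r) by (rewrite Hrel; field; lra).
  rewrite Heta'. field. repeat split; nra.
Qed.

Lemma Arg_pos_im x y : 0 < y -> Arg x y = PI / 2 - atan (x / y).
Proof.
  intros Hy. unfold Arg.
  destruct (Rlt_dec 0 x) as [Hx | Hx].
  { replace (y / x) with (/ (x / y)) by (field; lra).
    rewrite atan_inv; [lra | apply Rdiv_lt_0_compat; lra]. }
  destruct (Rlt_dec x 0) as [Hx' | Hx'].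
  - destruct (Rle_dec 0 y) as [_ | Hy']; [| lra].
    replace (y / x) with (- / (- x / y)) by (field; lra).
    rewrite atan_opp, atan_inv by (apply Rdiv_lt_0_compat; lra).
    replace (- x / y) with (- (x / y)) by (field; lra). rewrite atan_opp. lra.
  - replace x with 0 by lra. destruct (Rlt_dec 0 y); [| lra].
    unfold Rdiv. rewrite Rmult_0_l, atan_0. lra.
Qed.

Lemma Arg_pos_re x : 0 < x -> Arg x 0 = 0.
Proof.
  intros Hx. unfold Arg. destruct (Rlt_dec 0 x); [| lra].
  unfold Rdiv. rewrite Rmult_0_l. apply atan_0.
Qed.

Lemma Arg_conj x y : 0 < x \/ y <> 0 -> Arg x (- y) = - Arg x y.
Proof.
  intros H. unfold Arg.
  assert (E : atan (- y / x) = - atan (y / x))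
    by (unfold Rdiv; rewrite Ropp_mult_distr_l_reverse; apply atan_opp).
  rewrite E.
  destruct (Rlt_dec 0 x); [reflexivity |].
  destruct (Rlt_dec x 0).
  - destruct (Rle_dec 0 (- y)), (Rle_dec 0 y); destruct H; lra.
  - destruct (Rlt_dec 0 (- y)), (Rlt_dec 0 y), (Rlt_dec (- y) 0), (Rlt_dec y 0);
      destruct H; lra.
Qed.

Definition quartic (eta u x : R) : R :=
  - u ^ 2 * x ^ 4 - (1 - u ^ 2) * x ^ 3 + (5 + u ^ 2) * x ^ 2
  - (u ^ 2 + 4 * eta ^ 2 + 7) * x + 3.

Definition argcot (eta u th : R) : R :=
  let w := u ^ 2 * r_eta eta th ^ 2 in
  (1 - w * cos (2 * th)) / (- (w * sin (2 * th))).

Lemma argcot_derive eta u th : 0 < eta -> 0 < u -> - (PI / 2) < th < 0 ->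
  is_derive (argcot eta u) th
    (quartic eta u (r_eta eta th ^ 2) /
     (2 * u ^ 2 * r_eta eta th ^ 2 * sin th ^ 2 * cos th ^ 2
      * (1 + r_eta eta th ^ 2) * (1 - r_eta eta th ^ 2) ^ 2)).
Proof.
  intros Heta Hu Hth.
  assert (Hs : sin th < 0) by (apply sin_lt_0_var; lra).
  assert (Hc : 0 < cos th) by (apply cos_gt_0; lra).
  destruct (r_eta_props eta th Heta Hs) as [Hr Hrel].
  pose proof (r_eta_derive eta th Heta Hs) as Hdr.
  assert (Hw : 0 < u ^ 2 * r_eta eta th ^ 2) by (apply Rmult_lt_0_compat; nra).
  assert (Hc2 : cos th ^ 2 = 1 - sin th ^ 2) by (rewrite <- (sin2_cos2 th); unfold Rsqr; ring).
  unfold argcot. auto_derive.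
  { repeat split; try (eexists; exact Hdr).
    assert (0 < - sin th * cos th) by nra. rewrite sin_2a. intro. nra. }
  replace (Derive (fun x => r_eta eta x) th) with
    (cos th * (1 - r_eta eta th ^ 2) * r_eta eta th / (sin th * (1 + r_eta eta th ^ 2)))
    by (symmetry; apply is_derive_unique, Hdr).
  rewrite sin_2a, cos_2a_sin.
  set (r := r_eta eta th) in *. set (s := sin th) in *. set (c := cos th) in *.
  (* Only even powers of [c] survive; [c ^ 2 = 1 - s ^ 2] and [eta = s (r ^ 2 - 1) / r]
     then turn both sides into the same rational function of [r], [s], [u]. *)
  transitivity ((2 * ((1 - r ^ 2) / (1 + r ^ 2)) * c ^ 2 - 4 * u ^ 2 * r ^ 2 * s ^ 2 * c ^ 2
      + (1 - u ^ 2 * r ^ 2 + 2 * u ^ 2 * r ^ 2 * s ^ 2) * (1 - 2 * s ^ 2))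
      / (2 * u ^ 2 * r ^ 2 * s ^ 2 * c ^ 2)).
  - field. repeat split; nra.
  - assert (Heta' : eta = s * (r ^ 2 - 1) / r) by (rewrite Hrel; field; lra).
    unfold quartic. rewrite Hc2, Heta'. field. repeat split; nra.
Qed.

Section ArgFun.
Variables (eta u : R).
Hypotheses (Heta : 0 < eta) (Hu : 0 < u).

Lemma argfun_argcot th : - (PI / 2) < th < 0 -> argfun eta u th = PI / 2 - atan (argcot eta u th).
Proof.
  intros Hth.
  assert (Hs : sin th < 0) by (apply sin_lt_0_var; lra).
  assert (Hc : 0 < cos th) by (apply cos_gt_0; lra).
  destruct (r_eta_props eta th Heta Hs) as [Hr _].
  assert (Hw : 0 < u ^ 2 * r_eta eta th ^ 2) by (apply Rmult_lt_0_compat; nra).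
  assert (Hsc : 0 < - sin th * cos th) by nra.
  apply Arg_pos_im. rewrite sin_2a. nra.
Qed.

Lemma argfun_pos th : - (PI / 2) < th < 0 -> 0 < argfun eta u th.
Proof.
  intros Hth. rewrite argfun_argcot by exact Hth.
  pose proof (atan_bound (argcot eta u th)). lra.
Qed.

Lemma argfun_mid : argfun eta u (- (PI / 2)) = 0.
Proof.
  unfold argfun. replace (2 * - (PI / 2)) with (- PI) by field.
  rewrite sin_neg, cos_neg, sin_PI, cos_PI, Ropp_0, Rmult_0_r, Ropp_0.
  apply Arg_pos_re. nra.
Qed.

Lemma argfun_reflect th : - PI < th < 0 -> argfun eta u (- PI - th) = - argfun eta u th.
Proof.
  intros Hth.
  assert (Hs : sin th < 0) by (apply sin_lt_0_var; lra).
  destruct (r_eta_props eta th Heta Hs) as [Hr _].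
  assert (Hsin : sin (- PI - th) = sin th).
  { replace (- PI - th) with (- (th + PI)) by ring. rewrite sin_neg, neg_sin. ring. }
  assert (Hcos : cos (- PI - th) = - cos th).
  { replace (- PI - th) with (- (th + PI)) by ring. rewrite cos_neg, neg_cos. ring. }
  unfold argfun, r_eta. rewrite Hsin, !sin_2a, !cos_2a_sin, Hsin, Hcos. fold (r_eta eta th).
  set (w := u ^ 2 * r_eta eta th ^ 2).
  assert (Hw : 0 < w) by (apply Rmult_lt_0_compat; unfold w; nra).
  replace (- (w * (2 * sin th * - cos th))) with (- - (w * (2 * sin th * cos th))) by ring.
  apply Arg_conj.
  destruct (Req_dec (cos th) 0) as [Hc | Hc].
  - left. pose proof (sin2_cos2 th) as H. unfold Rsqr in H. rewrite Hc in H. nra.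
  - right. intros H. assert (E : (w * sin th) * cos th = 0) by lra.
    apply Rmult_integral in E as [E | E]; [nra | contradiction].
Qed.

Lemma argfun_increment x y : - (PI / 2) < x -> x < y -> y < 0 ->
  exists z k, x < z < y /\ 0 < k /\
    argfun eta u y - argfun eta u x = - k * quartic eta u (r_eta eta z ^ 2).
Proof.
  intros Hx Hxy Hy.
  destruct (MVT_is_derive (argcot eta u) _ x y Hxy
              (fun z Hz => argcot_derive eta u z Heta Hu ltac:(lra))) as [z [Hz Hmvt]].
  destruct (atan_increment (argcot eta u x) (argcot eta u y)) as [k [Hk Hatan]].
  assert (Hs : sin z < 0) by (apply sin_lt_0_var; lra).
  assert (Hc : 0 < cos z) by (apply cos_gt_0; lra).
  destruct (r_eta_props eta z Heta Hs) as [Hr _].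
  set (D := 2 * u ^ 2 * r_eta eta z ^ 2 * sin z ^ 2 * cos z ^ 2
            * (1 + r_eta eta z ^ 2) * (1 - r_eta eta z ^ 2) ^ 2) in Hmvt.
  assert (HD : 0 < D).
  { assert (0 < (1 - r_eta eta z ^ 2) ^ 2) by (apply pow_lt; nra).
    assert (0 < u ^ 2 * r_eta eta z ^ 2 * sin z ^ 2 * cos z ^ 2).
    { assert (0 < u ^ 2 * r_eta eta z ^ 2) by (apply Rmult_lt_0_compat; nra).
      assert (0 < sin z ^ 2 * cos z ^ 2) by (apply Rmult_lt_0_compat; nra). nra. }
    unfold D. nra. }
  exists z, (k * (y - x) / D). split; [exact Hz |]. split.
  - apply Rdiv_lt_0_compat; [nra | exact HD].
  - rewrite !argfun_argcot by lra.
    replace (PI / 2 - atan (argcot eta u y) - (PI / 2 - atan (argcot eta u x)))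
      with (- (atan (argcot eta u y) - atan (argcot eta u x))) by ring.
    rewrite Hatan, Hmvt. field. lra.
Qed.

End ArgFun.

Definition xmax (eta : R) : R := r_eta eta (- (PI / 2)) ^ 2.

Definition tau (eta x : R) : R := eta * sqrt x / (1 - x).

Definition theta_of (eta x : R) : R := asin (- tau eta x).

Section Reparametrisation.
Variable eta : R.
Hypothesis Heta : 0 < eta.

Lemma tau_lt_iff a b : 0 <= a < 1 -> 0 <= b < 1 -> (tau eta a < tau eta b <-> a < b).
Proof.
  apply (incr_lt_iff (fun x => 0 <= x < 1)). intros x y Hx Hy Hxy. unfold tau, Rdiv.
  pose proof (sqrt_pos x). pose proof (sqrt_lt_1_alt x y ltac:(lra)).
  assert (Hinv : / (1 - x) < / (1 - y)) by (apply Rinv_lt_contravar; nra).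
  pose proof (Rinv_0_lt_compat (1 - x) ltac:(lra)).
  assert (sqrt x * / (1 - x) < sqrt y * / (1 - y)) by nra.
  nra.
Qed.

Lemma tau_r2 th : sin th < 0 -> tau eta (r_eta eta th ^ 2) = - sin th.
Proof.
  intros Hs. destruct (r_eta_props eta th Heta Hs) as [Hr Hrel]. unfold tau.
  rewrite sqrt_pow2 by lra. rewrite <- Hrel. field. nra.
Qed.

Lemma xmax_bounds : 0 < xmax eta < 1.
Proof.
  destruct (r_eta_props eta _ Heta sin_mPI2_lt_0) as [Hr _]. unfold xmax. split; nra.
Qed.

Lemma tau_xmax : tau eta (xmax eta) = 1.
Proof. unfold xmax. rewrite tau_r2 by exact sin_mPI2_lt_0. rewrite sin_neg, sin_PI2. ring. Qed.

Lemma tau_bounds x : 0 <= x <= xmax eta -> 0 <= tau eta x <= 1.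
Proof.
  intros Hx. pose proof xmax_bounds. split.
  - unfold tau. pose proof (sqrt_pos x).
    apply Rdiv_le_0_compat; [nra | lra].
  - rewrite <- tau_xmax. destruct (Req_dec x (xmax eta)) as [-> | Hne]; [lra |].
    left. apply tau_lt_iff; lra.
Qed.

Lemma sin_theta_of x : 0 <= x <= xmax eta -> sin (theta_of eta x) = - tau eta x.
Proof. intros Hx. pose proof (tau_bounds x Hx). apply sin_asin. lra. Qed.

Lemma theta_of_lt_iff a b : 0 <= a <= xmax eta -> 0 <= b <= xmax eta ->
  (theta_of eta b < theta_of eta a <-> a < b).
Proof.
  intros Ha Hb. pose proof xmax_bounds.
  rewrite <- sin_lt_iff by apply asin_bound.
  rewrite !sin_theta_of by assumption.
  rewrite <- (tau_lt_iff a b) by lra. lra.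
Qed.

Lemma theta_of_le a b : 0 <= a -> a <= b -> b <= xmax eta -> theta_of eta b <= theta_of eta a.
Proof.
  intros Ha Hab Hb. destruct (Req_dec a b) as [<- | Hne]; [lra |].
  left. apply theta_of_lt_iff; lra.
Qed.

Lemma theta_of_0 : theta_of eta 0 = 0.
Proof.
  unfold theta_of, tau. rewrite sqrt_0, Rmult_0_r, Rdiv_0_l, Ropp_0. apply asin_0.
Qed.

Lemma theta_of_xmax : theta_of eta (xmax eta) = - (PI / 2).
Proof. unfold theta_of. rewrite tau_xmax, asin_opp, asin_1. reflexivity. Qed.

Lemma theta_of_bounds x : 0 <= x <= xmax eta ->
  - (PI / 2) <= theta_of eta x <= 0.
Proof.
  intros Hx. rewrite <- theta_of_0, <- theta_of_xmax. pose proof xmax_bounds.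
  split; [destruct (Req_dec x (xmax eta)) as [-> | Hne] | destruct (Req_dec x 0) as [-> | Hne]];
    try lra; left; apply theta_of_lt_iff; lra.
Qed.

Lemma theta_of_r2 z : - (PI / 2) <= z < 0 ->
  r_eta eta z ^ 2 <= xmax eta /\ theta_of eta (r_eta eta z ^ 2) = z.
Proof.
  intros Hz. assert (Hs : sin z < 0) by (apply sin_lt_0_var; lra).
  destruct (r_eta_props eta z Heta Hs) as [Hr _]. pose proof xmax_bounds.
  pose proof (SIN_bound z). pose proof (tau_r2 z Hs) as Htau.
  split.
  - destruct (Rle_or_lt (r_eta eta z ^ 2) (xmax eta)) as [| Hlt]; [assumption |].
    apply tau_lt_iff in Hlt; [| lra | nra]. rewrite tau_xmax, Htau in Hlt. lra.
  - unfold theta_of. rewrite Htau, Ropp_involutive. apply asin_sin. lra.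
Qed.

Lemma theta_of_lt_iff_r2 x z : 0 <= x <= xmax eta -> - (PI / 2) <= z < 0 ->
  (theta_of eta x < z <-> r_eta eta z ^ 2 < x).
Proof.
  intros Hx Hz. destruct (theta_of_r2 z Hz) as [Hr E].
  assert (Hr0 : 0 <= r_eta eta z ^ 2) by apply pow2_ge_0.
  pose proof (theta_of_lt_iff (r_eta eta z ^ 2) x ltac:(lra) Hx) as Hiff.
  rewrite E in Hiff. exact Hiff.
Qed.

Lemma lt_theta_of_iff_r2 x z : 0 <= x <= xmax eta -> - (PI / 2) <= z < 0 ->
  (z < theta_of eta x <-> x < r_eta eta z ^ 2).
Proof.
  intros Hx Hz. destruct (theta_of_r2 z Hz) as [Hr E].
  assert (Hr0 : 0 <= r_eta eta z ^ 2) by apply pow2_ge_0.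
  pose proof (theta_of_lt_iff x (r_eta eta z ^ 2) Hx ltac:(lra)) as Hiff.
  rewrite E in Hiff. exact Hiff.
Qed.

Lemma r2_theta_of x : 0 < x <= xmax eta -> r_eta eta (theta_of eta x) ^ 2 = x.
Proof.
  intros Hx. pose proof (theta_of_bounds x ltac:(lra)).
  assert (Hneg : theta_of eta x < 0).
  { rewrite <- theta_of_0. apply theta_of_lt_iff; lra. }
  pose proof (theta_of_lt_iff_r2 x (theta_of eta x) ltac:(lra) ltac:(lra)).
  pose proof (lt_theta_of_iff_r2 x (theta_of eta x) ltac:(lra) ltac:(lra)).
  destruct (Rtotal_order (r_eta eta (theta_of eta x) ^ 2) x) as [Hlt | [Heq | Hgt]];
    [| exact Heq |]; exfalso; intuition lra.
Qed.

End Reparametrisation.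

Definition quartic_d1 (eta u x : R) : R :=
  - 4 * u ^ 2 * x ^ 3 - 3 * (1 - u ^ 2) * x ^ 2 + 2 * (5 + u ^ 2) * x - (u ^ 2 + 4 * eta ^ 2 + 7).

Definition quartic_d2 (u x : R) : R := - 12 * u ^ 2 * x ^ 2 - 6 * (1 - u ^ 2) * x + 2 * (5 + u ^ 2).

Section Quartic.
Variables (eta u : R).
Hypotheses (Heta : 0 < eta) (Hu : 0 < u).

Lemma quartic_derive x : is_derive (quartic eta u) x (quartic_d1 eta u x).
Proof. unfold quartic. auto_derive; [exact I |]. unfold quartic_d1. ring. Qed.

Lemma quartic_d1_derive x : is_derive (quartic_d1 eta u) x (quartic_d2 u x).
Proof. unfold quartic_d1. auto_derive; [exact I |]. unfold quartic_d2. ring. Qed.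

Lemma quartic_xmax_neg : quartic eta u (xmax eta) < 0.
Proof.
  destruct (r_eta_props eta _ Heta sin_mPI2_lt_0) as [Hr Hrel].
  rewrite sin_neg, sin_PI2 in Hrel. unfold xmax.
  set (r := r_eta eta (- (PI / 2))) in *.
  assert (Heta' : eta = (1 - r ^ 2) / r).
  { apply (Rmult_eq_reg_r r); [| lra].
    replace ((1 - r ^ 2) / r * r) with (1 - r ^ 2) by (field; lra). lra. }
  replace (quartic eta u (r ^ 2))
    with (- (1 - r ^ 2) ^ 2 * (u ^ 2 * r ^ 2 * (r ^ 2 + 1) + r ^ 2 + 1))
    by (unfold quartic; rewrite Heta'; field; lra).
  assert (0 < (1 - r ^ 2) ^ 2) by (apply pow_lt; nra).
  assert (0 <= u ^ 2 * r ^ 2 * (r ^ 2 + 1)) by (apply Rmult_le_pos; nra).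
  nra.
Qed.

Lemma quartic_d1_neg x : u <= 1 -> 0 <= x <= 1 -> quartic_d1 eta u x < 0.
Proof.
  intros Hu1 Hx.
  replace (quartic_d1 eta u x)
    with ((x - 1) * (7 + u ^ 2 - (3 + u ^ 2) * x - 4 * u ^ 2 * x ^ 2) - 4 * eta ^ 2)
    by (unfold quartic_d1; ring).
  assert (0 <= 7 + u ^ 2 - (3 + u ^ 2) * x - 4 * u ^ 2 * x ^ 2).
  { assert (x ^ 2 <= 1) by nra. assert (u ^ 2 <= 1) by nra.
    assert (u ^ 2 * x ^ 2 <= u ^ 2) by nra. assert (u ^ 2 * x <= u ^ 2) by nra. nra. }
  assert ((x - 1) * (7 + u ^ 2 - (3 + u ^ 2) * x - 4 * u ^ 2 * x ^ 2) <= 0)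
    by (apply Rmult_le_0_r; lra).
  nra.
Qed.

Lemma quartic_d2_pos_below x y : 0 <= x < y -> 0 <= quartic_d2 u y -> 0 < quartic_d2 u x.
Proof.
  intros Hxy Hy.
  assert (E : y * quartic_d2 u x
              = (y - x) * quartic_d2 u 0 + x * quartic_d2 u y + 12 * u ^ 2 * x * y * (y - x))
    by (unfold quartic_d2; ring).
  assert (0 < (y - x) * quartic_d2 u 0) by (apply Rmult_lt_0_compat; unfold quartic_d2; nra).
  assert (0 <= x * quartic_d2 u y) by (apply Rmult_le_pos; lra).
  assert (0 <= 12 * u ^ 2 * x * y * (y - x)).
  { assert (0 <= x * y * (y - x)) by (apply Rmult_le_pos; nra). nra. }
  nra.
Qed.

Lemma quartic_d2_sign : exists a, 0 <= a <= xmax eta /\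
  nonneg_on (quartic_d2 u) 0 a /\ nonpos_on (quartic_d2 u) a (xmax eta).
Proof.
  pose proof (xmax_bounds eta Heta).
  destruct (Rle_or_lt 0 (quartic_d2 u (xmax eta))) as [Hpos | Hneg].
  { exists (xmax eta). split; [lra |]. split; intros x Hx; [| lra].
    left. apply (quartic_d2_pos_below x (xmax eta)); lra. }
  assert (Hcont : continuity (fun x => - quartic_d2 u x)).
  { apply continuity_opp, (continuity_of_is_derive _ (fun x => - 24 * u ^ 2 * x - 6 * (1 - u ^ 2))).
    intros x. unfold quartic_d2. auto_derive; [exact I | ring]. }
  destruct (IVT _ 0 (xmax eta) Hcont ltac:(lra) ltac:(unfold quartic_d2; nra) ltac:(lra))
    as [a [Ha Hroot]].
  exists a. split; [exact Ha |]. split; intros x Hx.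
  - left. apply (quartic_d2_pos_below x a); lra.
  - destruct (Rle_or_lt (quartic_d2 u x) 0) as [| Hpos]; [assumption |].
    pose proof (quartic_d2_pos_below a x ltac:(lra) ltac:(lra)). lra.
Qed.

Lemma quartic_sign_pattern : exists y1 y2 y3, 0 <= y1 <= y2 /\ y2 <= y3 <= xmax eta /\
  nonneg_on (quartic eta u) 0 y1 /\ nonpos_on (quartic eta u) y1 y2 /\
  nonneg_on (quartic eta u) y2 y3 /\ nonpos_on (quartic eta u) y3 (xmax eta).
Proof.
  destruct quartic_d2_sign as [a [Ha [H0a Hax]]].
  destruct (sign_pattern_of_deriv_pos_neg _ _ 0 a (xmax eta) quartic_d1_derive Ha H0a Hax)
    as [c [d [Hcd [Hd [H0c [Hcd' Hdx]]]]]].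
  exact (sign_pattern_of_deriv_neg_pos_neg _ _ 0 c d (xmax eta)
           quartic_derive Hcd Hd H0c Hcd' Hdx).
Qed.

Lemma quartic_decreasing x y : u <= 1 -> 0 <= x < y -> y <= 1 -> quartic eta u y < quartic eta u x.
Proof.
  intros Hu1 Hx Hy.
  destruct (MVT_is_derive _ _ x y ltac:(lra) (fun z _ => quartic_derive z)) as [z [Hz Hmvt]].
  pose proof (quartic_d1_neg z Hu1 ltac:(lra)). nra.
Qed.

Lemma quartic_nonneg_on_lt_xmax a b : a < b -> b <= xmax eta ->
  nonneg_on (quartic eta u) a b -> b < xmax eta.
Proof.
  intros Hab Hb Hpos. destruct (Req_dec b (xmax eta)) as [Eb | Hne]; [exfalso | lra].
  pose proof (nonneg_on_right_end _ a b
                (continuity_of_is_derive _ _ quartic_derive b) Hab Hpos).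
  pose proof quartic_xmax_neg. rewrite Eb in *. lra.
Qed.

Lemma quartic_root : exists x0, 0 < x0 < xmax eta /\ quartic eta u x0 = 0.
Proof.
  pose proof (xmax_bounds eta Heta). pose proof quartic_xmax_neg.
  assert (Hcont : continuity (fun x => - quartic eta u x))
    by (apply continuity_opp, (continuity_of_is_derive _ _ quartic_derive)).
  destruct (IVT _ 0 (xmax eta) Hcont ltac:(lra) ltac:(unfold quartic; lra) ltac:(lra))
    as [x0 [Hx0 Hroot]].
  exists x0. split; [| lra].
  split; [destruct (Req_dec x0 0) as [-> | ] | destruct (Req_dec x0 (xmax eta)) as [-> | ]];
    try lra; unfold quartic in Hroot; lra.
Qed.

End Quartic.

Definition piece_monotone (f : R -> R) (a b : R) : Prop :=
  let D := fun x => a <= x <= b /\ - PI < x < 0 in nondecr_on D f \/ nonincr_on D f.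

Lemma piece_monotone_reflect (f : R -> R) a b :
  (forall th, - PI < th < 0 -> f (- PI - th) = - f th) ->
  piece_monotone f a b -> piece_monotone f (- PI - b) (- PI - a).
Proof.
  intros Hf [Hm | Hm]; [left | right]; intros x y [Hx Hx'] [Hy Hy'] Hxy;
    specialize (Hm (- PI - y) (- PI - x) ltac:(lra) ltac:(lra) ltac:(lra));
    rewrite !Hf in Hm by lra; lra.
Qed.

Lemma Pthe_quartic eta u th : Pthe eta u th = quartic eta u (r_eta eta th ^ 2).
Proof. unfold Pthe, quartic. ring. Qed.

Section Monotonicity.
Variables (eta u : R).
Hypotheses (Heta : 0 < eta) (Hu : 0 < u).

Lemma right_piece_monotone a b : 0 <= a <= b -> b <= xmax eta ->
  nonneg_on (quartic eta u) a b \/ nonpos_on (quartic eta u) a b ->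
  piece_monotone (argfun eta u) (theta_of eta b) (theta_of eta a).
Proof.
  intros Hab Hb Hsign.
  pose proof (theta_of_bounds eta Heta a ltac:(lra)).
  pose proof (theta_of_bounds eta Heta b ltac:(lra)).
  assert (Hbetween : forall z, theta_of eta b < z < theta_of eta a ->
                       a < r_eta eta z ^ 2 < b).
  { intros z Hz. split.
    - apply (lt_theta_of_iff_r2 eta Heta); lra.
    - apply (theta_of_lt_iff_r2 eta Heta); lra. }
  assert (Hlt : forall x y, theta_of eta b <= x -> x < y -> y <= theta_of eta a -> a < b).
  { intros x y Hx Hxy Hy. destruct (Req_dec a b) as [<- | Hne]; lra. }
  destruct Hsign as [Hpos | Hneg]; [right | left];
    intros x y [Hx _] [Hy Hy0] Hxy; (destruct (Req_dec x y) as [<- | Hne]; [lra |]);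
    pose proof (Hlt x y ltac:(lra) ltac:(lra) ltac:(lra)) as Hab'.
  - pose proof (quartic_nonneg_on_lt_xmax eta u Heta a b Hab' Hb Hpos).
    assert (- (PI / 2) < theta_of eta b).
    { rewrite <- (theta_of_xmax eta Heta). apply (theta_of_lt_iff eta Heta); lra. }
    destruct (argfun_increment eta u Heta Hu x y ltac:(lra) ltac:(lra) ltac:(lra))
      as [z [k [Hz [Hk Hinc]]]].
    specialize (Hpos _ (Hbetween z ltac:(lra))). nra.
  - destruct (Req_dec x (- (PI / 2))) as [-> | Hx'].
    { rewrite (argfun_mid eta u). left. apply (argfun_pos eta u Heta Hu). lra. }
    destruct (argfun_increment eta u Heta Hu x y ltac:(lra) ltac:(lra) ltac:(lra))
      as [z [k [Hz [Hk Hinc]]]].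
    specialize (Hneg _ (Hbetween z ltac:(lra))). nra.
Qed.

Lemma left_piece_monotone a b : 0 <= a <= b -> b <= xmax eta ->
  nonneg_on (quartic eta u) a b \/ nonpos_on (quartic eta u) a b ->
  piece_monotone (argfun eta u) (- PI - theta_of eta a) (- PI - theta_of eta b).
Proof.
  intros Hab Hb Hsign. apply piece_monotone_reflect.
  - apply (argfun_reflect eta u Heta Hu).
  - apply right_piece_monotone; assumption.
Qed.

Lemma argfun_piecewise_monotone :
  exists (n : nat) (t : nat -> R),
    (1 <= n <= 8)%nat /\ t 0%nat = - PI /\ t n = 0 /\
    (forall i, (i < n)%nat -> t i < t (S i)) /\
    (forall i, (i < n)%nat -> piece_monotone (argfun eta u) (t i) (t (S i))).
Proof.
  destruct (quartic_sign_pattern eta u Heta) as [y1 [y2 [y3 [H12 [H3 [S1 [S2 [S3 S4]]]]]]]].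
  pose proof (xmax_bounds eta Heta). pose proof PI_RGT_0.
  pose proof (theta_of_0 eta) as Htheta0. pose proof (theta_of_xmax eta Heta) as Hthetamax.
  set (t := fun i => match i with
             | 0%nat => - PI - theta_of eta 0 | 1%nat => - PI - theta_of eta y1
             | 2%nat => - PI - theta_of eta y2 | 3%nat => - PI - theta_of eta y3
             | 4%nat => theta_of eta (xmax eta) | 5%nat => theta_of eta y3
             | 6%nat => theta_of eta y2 | 7%nat => theta_of eta y1 | _ => theta_of eta 0 end).
  destruct (strict_subchain (piece_monotone (argfun eta u)) 8 t) as
    [n [s [Hn [Hs0 [Hsn [Hs Hmono]]]]]].
  - simpl. lra.
  - pose proof (theta_of_le eta Heta 0 y1 ltac:(lra) ltac:(lra) ltac:(lra)).
    pose proof (theta_of_le eta Heta y1 y2 ltac:(lra) ltac:(lra) ltac:(lra)).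
    pose proof (theta_of_le eta Heta y2 y3 ltac:(lra) ltac:(lra) ltac:(lra)).
    pose proof (theta_of_le eta Heta y3 (xmax eta) ltac:(lra) ltac:(lra) ltac:(lra)).
    intros i Hi. destruct i as [| [| [| [| [| [| [| [| i]]]]]]]]; simpl; lra || lia.
  - assert (Hmid : theta_of eta (xmax eta) = - PI - theta_of eta (xmax eta)) by lra.
    intros i Hi. destruct i as [| [| [| [| [| [| [| [| i]]]]]]]]; simpl; [..| lia].
    + apply left_piece_monotone; auto; lra.
    + apply left_piece_monotone; auto; lra.
    + apply left_piece_monotone; auto; lra.
    + rewrite Hmid. apply left_piece_monotone; auto; lra.
    + apply right_piece_monotone; auto; lra.
    + apply right_piece_monotone; auto; lra.
    + apply right_piece_monotone; auto; lra.
    + apply right_piece_monotone; auto; lra.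
  - exists n, s. split; [lia |].
    split; [rewrite Hs0; simpl; lra |]. split; [rewrite Hsn; simpl; lra |]. auto.
Qed.

Lemma argfun_decr_reflect a : - (PI / 2) <= a < 0 ->
  decr_on (fun x => a < x < 0) (argfun eta u) ->
  decr_on (fun x => - PI < x < - a - PI) (argfun eta u).
Proof.
  intros Ha Hdec x y Hx Hy Hxy.
  specialize (Hdec (- PI - y) (- PI - x) ltac:(lra) ltac:(lra) ltac:(lra)).
  rewrite !(argfun_reflect eta u Heta Hu) in Hdec by lra. lra.
Qed.

Lemma argfun_incr_reflect a : - (PI / 2) < a < 0 ->
  incr_on (fun x => - (PI / 2) < x < a) (argfun eta u) ->
  incr_on (fun x => - a - PI < x < a) (argfun eta u).
Proof.
  intros Ha Hinc.
  assert (Hleft : forall x, - PI < x < - (PI / 2) -> argfun eta u x < 0).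
  { intros x Hx. pose proof (argfun_pos eta u Heta Hu (- PI - x) ltac:(lra)).
    rewrite (argfun_reflect eta u Heta Hu) in H by lra. lra. }
  assert (Hright : forall y, - (PI / 2) <= y < a -> 0 <= argfun eta u y).
  { intros y Hy. destruct (Req_dec y (- (PI / 2))) as [-> | Hne].
    - rewrite argfun_mid. lra.
    - left. apply (argfun_pos eta u Heta Hu). lra. }
  intros x y Hx Hy Hxy.
  destruct (Rlt_or_le x (- (PI / 2))) as [Hxl | Hxr].
  - destruct (Rlt_or_le y (- (PI / 2))) as [Hyl | Hyr].
    + specialize (Hinc (- PI - y) (- PI - x) ltac:(lra) ltac:(lra) ltac:(lra)).
      rewrite !(argfun_reflect eta u Heta Hu) in Hinc by lra. lra.
    + pose proof (Hleft x ltac:(lra)). pose proof (Hright y ltac:(lra)). lra.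
  - destruct (Req_dec x (- (PI / 2))) as [-> | Hne].
    + rewrite argfun_mid. apply (argfun_pos eta u Heta Hu). lra.
    + apply Hinc; lra.
Qed.

Lemma argfun_unimodal : u <= 1 ->
  exists tt, - (PI / 2) < tt < 0 /\ Pthe eta u tt = 0 /\
    (forall th, - (PI / 2) < th < 0 -> Pthe eta u th = 0 -> th = tt) /\
    incr_on (fun x => - (PI / 2) < x < tt) (argfun eta u) /\
    decr_on (fun x => tt < x < 0) (argfun eta u).
Proof.
  intros Hu1. pose proof (xmax_bounds eta Heta).
  destruct (quartic_root eta u Heta) as [x0 [Hx0 Hroot]].
  assert (Htt : - (PI / 2) < theta_of eta x0 < 0).
  { rewrite <- (theta_of_0 eta), <- (theta_of_xmax eta Heta).
    split; apply (theta_of_lt_iff eta Heta); lra. }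
  assert (Hpos : forall z, theta_of eta x0 < z < 0 -> 0 < quartic eta u (r_eta eta z ^ 2)).
  { intros z Hz.
    assert (Hr : r_eta eta z ^ 2 < x0) by (apply (theta_of_lt_iff_r2 eta Heta); lra).
    pose proof (pow2_ge_0 (r_eta eta z)).
    pose proof (quartic_decreasing eta u Heta Hu (r_eta eta z ^ 2) x0 Hu1
                  ltac:(lra) ltac:(lra)).
    lra. }
  assert (Hneg : forall z, - (PI / 2) < z < theta_of eta x0 -> quartic eta u (r_eta eta z ^ 2) < 0).
  { intros z Hz.
    assert (Hr : x0 < r_eta eta z ^ 2) by (apply (lt_theta_of_iff_r2 eta Heta); lra).
    pose proof (proj1 (theta_of_r2 eta Heta z ltac:(lra))).
    pose proof (quartic_decreasing eta u Heta Hu x0 (r_eta eta z ^ 2) Hu1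
                  ltac:(lra) ltac:(lra)).
    lra. }
  exists (theta_of eta x0). split; [exact Htt |]. split; [| split; [| split]].
  - rewrite Pthe_quartic, r2_theta_of by (auto; lra). exact Hroot.
  - intros th Hth Hp. rewrite Pthe_quartic in Hp.
    destruct (Rtotal_order th (theta_of eta x0)) as [Hlt | [Heq | Hgt]]; [| exact Heq |].
    + specialize (Hneg th ltac:(lra)). lra.
    + specialize (Hpos th ltac:(lra)). lra.
  - intros x y Hx Hy Hxy.
    destruct (argfun_increment eta u Heta Hu x y ltac:(lra) Hxy ltac:(lra))
      as [z [k [Hz [Hk Hinc]]]].
    specialize (Hneg z ltac:(lra)). nra.
  - intros x y Hx Hy Hxy.
    destruct (argfun_increment eta u Heta Hu x y ltac:(lra) Hxy ltac:(lra))
      as [z [k [Hz [Hk Hinc]]]].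
    specialize (Hpos z ltac:(lra)). nra.
Qed.

End Monotonicity.

Theorem lemma5p2 (eta u : R) (Heta : 0 < eta) (Hu : 0 < u) :
  (* (-PI,0) splits into at most 9 intervals, with breakpoints
     -PI = t 0 < t 1 < ... < t n = 0, on each of which argfun is monotonic *)
  (exists (n : nat) (t : nat -> R),
      (1 <= n)%nat /\ (n <= 9)%nat /\ t 0%nat = - PI /\ t n = 0 /\
      (forall i, (i < n)%nat -> t i < t (S i)) /\
      (forall i, (i < n)%nat ->
         let D := fun x => t i <= x <= t (S i) /\ - PI < x < 0 in
         nondecr_on D (argfun eta u) \/ nonincr_on D (argfun eta u)))
  /\
  (u <= 1 ->
   exists tt : R,
     - (PI / 2) < tt < 0 /\
     Pthe eta u tt = 0 /\
     (forall th, - (PI / 2) < th < 0 -> Pthe eta u th = 0 -> th = tt) /\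
     decr_on (fun x => - PI < x < - tt - PI) (argfun eta u) /\
     incr_on (fun x => - tt - PI < x < tt) (argfun eta u) /\
     decr_on (fun x => tt < x < 0) (argfun eta u)).
Proof.
  split.
  - destruct (argfun_piecewise_monotone eta u Heta Hu)
      as [n [t [Hn [Ht0 [Htn [Ht Hmono]]]]]].
    exists n, t. repeat split; try lia; assumption.
  - intros Hu1.
    destruct (argfun_unimodal eta u Heta Hu Hu1)
      as [tt [Htt [Hroot [Huniq [Hinc Hdec]]]]].
    exists tt. repeat split; try lra; try assumption.
    + apply (argfun_decr_reflect eta u Heta Hu); [lra | exact Hdec].
    + apply (argfun_incr_reflect eta u Heta Hu); [lra | exact Hinc].
Qed.
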